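(* Let $\mathcal{N}$ be a countably infinite set and $K$ a group acting on $\mathcal{N}$ with no finite orbits. Let $\mathrm{LO}(\mathcal{N})\subseteq\{0,1\}^{\mathcal{N}^2}$ be the compact space of linear orderings of $\mathcal{N}$, on which $K$ acts by $x<^{g\cdot L}y\Leftrightarrow g^{-1}x<^L g^{-1}y$, and let $\lambda$ be the uniform measure on $\mathrm{LO}(\mathcal{N})$, i.e. the Borel probability measure with $\lambda(\{L: a_1<^L\dots<^L a_k\})=1/k!$ for all $k$ and all distinct $a_1,\dots,a_k\in\mathcal{N}$. Then $\lambda$ is $K$-ergodic: every Borel set $A\subseteq\mathrm{LO}(\mathcal{N})$ with $\lambda(A\triangle g\cdot A)=0$ for all $g\in K$ satisfies $\lambda(A)\in\{0,1\}$. *)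

From Stdlib Require Import Reals List Bool Arith.
Import ListNotations.
Open Scope R_scope.

Set Implicit Arguments.

Record Group := {
  gcar :> Type;
  gmul : gcar -> gcar -> gcar;
  gone : gcar;
  ginv : gcar -> gcar;
  gmul_assoc : forall a b c, gmul a (gmul b c) = gmul (gmul a b) c;
  gmul_1l : forall a, gmul gone a = a;
  gmul_Vl : forall a, gmul (ginv a) a = gone
}.

Record Action (K : Group) (N : Type) := {
  act :> K -> N -> N;
  act_one : forall x, act (gone K) x = x;
  act_mul : forall g h x, act (gmul K g h) x = act g (act h x)
}.

Definition countably_infinite (N : Type) : Prop :=
  exists f : nat -> N, (forall m n, f m = f n -> m = n) /\ (forall x, exists n, f n = x).

Definition no_finite_orbits (K : Group) (N : Type) (a : Action K N) : Prop :=
  forall x : N, ~ exists l : list N, forall g : K, In (a g x) l.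

(* a point of {0,1}^(N^2) is a map N -> N -> bool; L x y = true means x <^L y *)
Definition is_lo (N : Type) (R : N -> N -> bool) : Prop :=
  (forall x, R x x = false) /\
  (forall x y z, R x y = true -> R y z = true -> R x z = true) /\
  (forall x y, x <> y -> R x y = true \/ R y x = true).

Definition LO (N : Type) := { R : N -> N -> bool | is_lo R }.

Definition lt_lo (N : Type) (L : LO N) (x y : N) : bool := proj1_sig L x y.

Lemma act_inj (K : Group) (N : Type) (a : Action K N) (g : K) (x y : N) :
  a g x = a g y -> x = y.
Proof.
  intro H. rewrite <- (act_one a x), <- (act_one a y), <- (gmul_Vl K g).
  rewrite !act_mul, H. reflexivity.
Qed.

Lemma is_lo_act (K : Group) (N : Type) (a : Action K N) (g : K) (L : LO N) :
  is_lo (fun x y => proj1_sig L (a (ginv K g) x) (a (ginv K g) y)).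
Proof.
  destruct L as [R [H1 [H2 H3]]]; simpl. split; [|split].
  - intro; apply H1.
  - intros x y z; apply H2.
  - intros x y Hxy. apply H3. intro E. apply Hxy. exact (act_inj a _ _ _ E).
Qed.

Definition act_lo (K : Group) (N : Type) (a : Action K N) (g : K) (L : LO N) : LO N :=
  exist _ _ (is_lo_act a g L).

(* g . A = { g . L | L in A } = { L | g^-1 . L in A } *)
Definition act_set (K : Group) (N : Type) (a : Action K N) (g : K)
  (A : LO N -> Prop) : LO N -> Prop :=
  fun L => A (act_lo a (ginv K g) L).

Definition symdiff (X : Type) (A B : X -> Prop) : X -> Prop :=
  fun x => (A x /\ ~ B x) \/ (B x /\ ~ A x).

(* The Borel sigma-algebra of the (second countable) subspace LO(N) of the
   product space {0,1}^(N^2) is generated by the subbasic clopen sets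
   {L | x <^L y}. *)
Inductive borel (N : Type) : (LO N -> Prop) -> Prop :=
  | borel_gen : forall x y, borel (fun L => lt_lo L x y = true)
  | borel_compl : forall A, borel A -> borel (fun L => ~ A L)
  | borel_union : forall A : nat -> LO N -> Prop,
      (forall n, borel (A n)) -> borel (fun L => exists n, A n L)
  | borel_ext : forall A B, borel A -> (forall L, A L <-> B L) -> borel B.

(* Borel probability measure on LO(N) (values on non-Borel sets irrelevant) *)
Definition borel_prob_measure (N : Type) (mu : (LO N -> Prop) -> R) : Prop :=
  (forall A, borel A -> 0 <= mu A) /\
  mu (fun _ => True) = 1 /\
  (forall A : nat -> LO N -> Prop,
     (forall n, borel (A n)) ->
     (forall m n L, m <> n -> A m L -> A n L -> False) ->
     infinite_sum (fun n => mu (A n)) (mu (fun L => exists n, A n L))).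

Fixpoint chain (N : Type) (L : LO N) (l : list N) : Prop :=
  match l with
  | [] => True
  | x :: l' =>
      match l' with
      | [] => True
      | y :: _ => lt_lo L x y = true /\ chain L l'
      end
  end.

Definition uniform_lo (N : Type) (mu : (LO N -> Prop) -> R) : Prop :=
  borel_prob_measure mu /\
  (forall l : list N, NoDup l -> mu (fun L => chain L l) = / INR (fact (length l))).

Definition ergodic (K : Group) (N : Type) (a : Action K N) (mu : (LO N -> Prop) -> R) : Prop :=
  forall A : LO N -> Prop, borel A ->
    (forall g : K, mu (symdiff A (act_set a g A)) = 0) ->
    mu A = 0 \/ mu A = 1.

From Stdlib Require Import Reals List Permutation Classical FunctionalExtensionality
  PropExtensionality Lra Lia Arith.
Import ListNotations.
Open Scope R_scope.

(* For invariant A, with B a cylinder on F close to A and g moving F off itself,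
   lambda(A) = lambda(A /\ gA) ~ lambda(B /\ gB) = lambda(B)^2 ~ lambda(A)^2,
   hence lambda(A) = lambda(A)^2, i.e. lambda(A) is 0 or 1. *)

Lemma event_ext (X : Type) (A B : X -> Prop) : (forall x, A x <-> B x) -> A = B.
Proof.
  intro H; apply functional_extensionality; intro x; apply propositional_extensionality, H.
Qed.

Lemma arbitrarily_small_zero (x : R) : (forall e, e > 0 -> Rabs x <= e) -> x = 0.
Proof.
  intro H. destruct (Req_dec x 0) as [|Hx]; auto. exfalso.
  assert (Hpos : Rabs x / 2 > 0) by (apply Rabs_pos_lt in Hx; lra).
  specialize (H _ Hpos). pose proof (Rabs_pos x). lra.
Qed.

Section GroupFacts.
Variable K : Group.

Lemma gmul_Vr (g : K) : gmul K g (ginv K g) = gone K.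
Proof.
  set (b := ginv K g).
  assert (Hb : gmul K b (gmul K g b) = b)
    by (rewrite gmul_assoc; unfold b; rewrite gmul_Vl, gmul_1l; auto).
  rewrite <- (gmul_1l K (gmul K g b)), <- (gmul_Vl K b) at 1.
  rewrite <- gmul_assoc, Hb. apply gmul_Vl.
Qed.

Lemma gmul_1r (g : K) : gmul K g (gone K) = g.
Proof. rewrite <- (gmul_Vl K g), gmul_assoc, gmul_Vr, gmul_1l. reflexivity. Qed.

Lemma ginv_inv (g : K) : ginv K (ginv K g) = g.
Proof.
  rewrite <- (gmul_1l K g) at 2. rewrite <- (gmul_Vl K (ginv K g)).
  rewrite <- gmul_assoc, gmul_Vl, gmul_1r. reflexivity.
Qed.

End GroupFacts.

(* A finite set of points admits a g with
   gF /\ F = {} unless K is covered by the finitely many sets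
   {g | g x = y} (x, y in F), which are cosets of point stabilizers; we show
   by induction on the set of points x involved that no such cover exists. *)
Section Neumann.
Variable N : Type.
Variable K : Group.
Variable a : Action K N.
Hypothesis Horb : no_finite_orbits a.

Lemma act_inv_l (g : K) x : a (ginv K g) (a g x) = x.
Proof. rewrite <- act_mul, gmul_Vl, act_one; auto. Qed.

Lemma act_inv_r (g : K) x : a g (a (ginv K g) x) = x.
Proof. rewrite <- act_mul, gmul_Vr, act_one; auto. Qed.

Definition stabilizer_cover (C : list (N * N)) : Prop :=
  forall g : K, exists p, In p C /\ a g (fst p) = snd p.

Lemma orbit_escapes (x : N) (l : list N) : exists g : K, ~ In (a g x) l.
Proof.
  apply NNPP. intro Hnone. apply (Horb x). exists l. intro g.
  apply NNPP. intro Hg. apply Hnone. exists g; exact Hg.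
Qed.

Lemma exists_filter {X : Type} (P : X -> Prop) (l : list X) :
  exists l', forall z, In z l' <-> In z l /\ P z.
Proof.
  induction l as [|x l [l' H]]; [exists []; simpl; tauto|].
  destruct (classic (P x)) as [Hx|Hx].
  - exists (x :: l'). intro z; simpl; rewrite H.
    split; [intros [<-|]; tauto | intros [[<-|] ?]; tauto].
  - exists l'. intro z; simpl; rewrite H. split; [tauto | intros [[<-|] ?]; tauto].
Qed.

(* Let C cover K, and let h x0 avoid all targets of C.  Then the elements g
   with g x0 = t x0 are covered by translates of the pairs of C not based
   at x0: the element h t^-1 g sends x0 to h x0, so it is covered by such a
   pair (x, y), whence g x = t h^-1 y. *)
Lemma translate_cover (C C' : list (N * N)) (x0 : N) (h t : K) :
  stabilizer_cover C -> ~ In (a h x0) (map snd C) ->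
  (forall p, In p C -> fst p <> x0 -> In p C') ->
  forall g, a g x0 = a t x0 ->
  exists p, In p (map (fun p => (fst p, a t (a (ginv K h) (snd p)))) C') /\ a g (fst p) = snd p.
Proof.
  intros Hcov Hh HC' g Hg.
  set (k := gmul K h (gmul K (ginv K t) g)).
  assert (Hk : a k x0 = a h x0) by (unfold k; rewrite !act_mul, Hg, act_inv_l; auto).
  destruct (Hcov k) as [p [Hp Hkp]].
  assert (Hpx : fst p <> x0).
  { intros E. apply Hh. rewrite <- Hk, <- E, Hkp. apply in_map; auto. }
  exists (fst p, a t (a (ginv K h) (snd p))). split.
  - apply (in_map (fun p => (fst p, _)) C' p), HC'; auto.
  - simpl. unfold k in Hkp. rewrite !act_mul in Hkp.
    rewrite <- Hkp, act_inv_l, act_inv_r. reflexivity.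
Qed.

Lemma targets_cover (C C' : list (N * N)) (X : list N) (x0 : N) (h : K) :
  stabilizer_cover C -> ~ In (a h x0) (map snd C) ->
  (forall p, In p C -> fst p <> x0 -> In p C') -> (forall p, In p C' -> In (fst p) X) ->
  forall Y, exists C2, (forall p, In p C2 -> In (fst p) X) /\
    forall g, In (a g x0) Y -> exists p, In p C2 /\ a g (fst p) = snd p.
Proof.
  intros Hcov Hh HC' HC'X Y. induction Y as [|y Y [C2 [HC2 HC2cov]]].
  - exists []; split; [intros p [] | intros g []].
  - destruct (classic (exists t, a t x0 = y)) as [[t <-]|Hunreached].
    + exists (map (fun p => (fst p, a t (a (ginv K h) (snd p)))) C' ++ C2). split.
      * intros p Hp. apply in_app_or in Hp as [Hp|Hp]; auto.
        apply in_map_iff in Hp as [q [<- Hq]]. simpl. auto.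
      * intros g [Hg|Hg].
        -- destruct (translate_cover C C' x0 h t Hcov Hh HC' g (eq_sym Hg)) as [p [Hp Hgp]].
           exists p; split; auto. apply in_or_app; auto.
        -- destruct (HC2cov g Hg) as [p [Hp Hgp]]. exists p; split; auto. apply in_or_app; auto.
    + exists C2. split; auto. intros g [Hg|Hg]; auto.
      exfalso; apply Hunreached; exists g; auto.
Qed.

Lemma no_stabilizer_cover (X : list N) : forall C : list (N * N),
  (forall p, In p C -> In (fst p) X) -> ~ stabilizer_cover C.
Proof.
  induction X as [|x0 X IH]; intros C HCX Hcov.
  - destruct (Hcov (gone K)) as [p [Hp _]]. apply (HCX p Hp).
  - destruct (exists_filter (fun p : N * N => fst p <> x0) C) as [C' HC'].
    destruct (orbit_escapes x0 (map snd C)) as [h Hh].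
    assert (HC'X : forall p, In p C' -> In (fst p) X).
    { intros p Hp. apply HC' in Hp as [Hp Hne]. destruct (HCX p Hp); [congruence | auto]. }
    destruct (targets_cover C C' X x0 h Hcov Hh (fun p H1 H2 => proj2 (HC' p) (conj H1 H2))
                HC'X (map snd C)) as [C2 [HC2X HC2cov]].
    apply (IH (C' ++ C2)).
    + intros p Hp. apply in_app_or in Hp as [Hp|Hp]; auto.
    + intro g. destruct (Hcov g) as [p [Hp Hgp]].
      destruct (classic (fst p = x0)) as [E|E].
      * destruct (HC2cov g) as [q [Hq Hgq]].
        { rewrite <- E, Hgp. apply in_map; auto. }
        exists q; split; auto. apply in_or_app; auto.
      * exists p; split; auto. apply in_or_app; left; apply HC'; auto.
Qed.

Lemma neumann (F : list N) : exists h : K, forall x, In x F -> ~ In (a h x) F.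
Proof.
  apply NNPP. intro Hnone.
  apply (no_stabilizer_cover F (list_prod F F)).
  - intros [x y] Hp. apply in_prod_iff in Hp. simpl; tauto.
  - intro g. apply NNPP. intro Hg. apply Hnone. exists g. intros x Hx HgX.
    apply Hg. exists (x, a g x). split; auto. apply in_prod; auto.
Qed.

End Neumann.

Section Orderings.
Variable N : Type.
(* A point of N; it is needed to form Borel sets at all. *)
Variable pt : N.

Lemma lt_irrefl (L : LO N) x : lt_lo L x x = false.
Proof. destruct L as [R HR]; apply HR. Qed.

Lemma lt_trans (L : LO N) x y z :
  lt_lo L x y = true -> lt_lo L y z = true -> lt_lo L x z = true.
Proof. destruct L as [R HR]; apply HR. Qed.

Lemma lt_total (L : LO N) x y : x <> y -> lt_lo L x y = true \/ lt_lo L y x = true.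
Proof. destruct L as [R HR]; apply HR. Qed.

Lemma lt_asym (L : LO N) x y : lt_lo L x y = true -> lt_lo L y x = false.
Proof.
  intro Hxy. destruct (lt_lo L y x) eqn:Hyx; auto.
  pose proof (lt_trans L x y x Hxy Hyx) as Hxx. rewrite lt_irrefl in Hxx; discriminate.
Qed.



Lemma borel_true : borel (fun _ : LO N => True).
Proof.
  apply borel_ext with (fun L => ~ lt_lo L pt pt = true).
  - apply borel_compl, borel_gen.
  - intro L; rewrite lt_irrefl; split; auto; discriminate.
Qed.

Lemma borel_false : borel (fun _ : LO N => False).
Proof. apply borel_ext with (fun _ => ~ True); [apply borel_compl, borel_true | tauto]. Qed.

Lemma borel_or (A B : LO N -> Prop) : borel A -> borel B -> borel (fun L => A L \/ B L).
Proof.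
  intros HA HB.
  apply borel_ext with (fun L => exists n : nat, (match n with O => A | _ => B end) L).
  - apply borel_union. intros [|n]; auto.
  - intro L; split.
    + intros [[|n] H]; auto.
    + intros [H|H]; [exists O | exists 1%nat]; auto.
Qed.

Lemma borel_and (A B : LO N -> Prop) : borel A -> borel B -> borel (fun L => A L /\ B L).
Proof.
  intros HA HB. apply borel_ext with (fun L => ~ (~ A L \/ ~ B L)).
  - apply borel_compl, borel_or; apply borel_compl; auto.
  - intro L; tauto.
Qed.

Lemma borel_diff (A B : LO N -> Prop) : borel A -> borel B -> borel (fun L => A L /\ ~ B L).
Proof. intros; apply borel_and; auto; apply borel_compl; auto. Qed.

Lemma borel_symdiff (A B : LO N -> Prop) : borel A -> borel B -> borel (symdiff A B).
Proof. intros; apply borel_or; apply borel_diff; auto. Qed.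

Lemma borel_exists_list (X : Type) (E : X -> LO N -> Prop) (l : list X) :
  (forall x, In x l -> borel (E x)) -> borel (fun L => exists x, In x l /\ E x L).
Proof.
  induction l as [|x l IH]; intro HE.
  - apply borel_ext with (fun _ => False); [apply borel_false|].
    intro L; split; [tauto | intros [y [[] _]]].
  - apply borel_ext with (fun L => E x L \/ exists y, In y l /\ E y L).
    + apply borel_or; [apply HE; simpl; auto | apply IH; intros; apply HE; simpl; auto].
    + intro L; split.
      * intros [H|[y [Hy H]]]; [exists x | exists y]; simpl; auto.
      * intros [y [[<-|Hy] H]]; auto. right; exists y; auto.
Qed.

Lemma borel_chain (l : list N) : borel (fun L => chain L l).
Proof.
  induction l as [|x [|y l] IH]; simpl; try apply borel_true.
  apply borel_and; [apply borel_gen | exact IH].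
Qed.



Definition determined_by (F : list N) (B : LO N -> Prop) : Prop :=
  forall L L', (forall x y, In x F -> In y F -> lt_lo L x y = lt_lo L' x y) -> B L -> B L'.

Definition cylinder (B : LO N -> Prop) : Prop :=
  borel B /\ exists F, determined_by F B.

Lemma cylinder_false : cylinder (fun _ => False).
Proof. split; [apply borel_false | exists []; intros L L' _ []]. Qed.

Lemma cylinder_gen x y : cylinder (fun L => lt_lo L x y = true).
Proof.
  split; [apply borel_gen|]. exists [x; y]. intros L L' Hagree H.
  rewrite <- Hagree; simpl; auto.
Qed.

Lemma cylinder_compl B : cylinder B -> cylinder (fun L => ~ B L).
Proof.
  intros [HB [F HF]]. split; [apply borel_compl; auto|]. exists F.
  intros L L' Hagree HnB HB'. apply HnB, (HF L' L); auto.
  intros; symmetry; auto.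
Qed.

Lemma cylinder_or B1 B2 : cylinder B1 -> cylinder B2 -> cylinder (fun L => B1 L \/ B2 L).
Proof.
  intros [HB1 [F1 HF1]] [HB2 [F2 HF2]]. split; [apply borel_or; auto|].
  exists (F1 ++ F2). intros L L' Hagree [H|H]; [left; apply (HF1 L) | right; apply (HF2 L)];
  auto; intros; apply Hagree; apply in_or_app; auto.
Qed.

Section Measure.
Variable mu : (LO N -> Prop) -> R.
Hypothesis Hmu : borel_prob_measure mu.

Lemma measure_nonneg A : borel A -> 0 <= mu A.
Proof. apply Hmu. Qed.

Lemma measure_full : mu (fun _ => True) = 1.
Proof. apply Hmu. Qed.

(* The constant series c + c + ... converges only if c = 0. *)
Lemma measure_empty : mu (fun _ => False) = 0.
Proof.
  destruct Hmu as [_ [_ Hadd]].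
  pose proof (Hadd (fun _ _ => False) (fun _ => borel_false) (fun m n L _ F _ => F)) as Hs.
  cbv beta in Hs.
  replace (fun L : LO N => exists _ : nat, False) with (fun _ : LO N => False) in Hs
    by (apply event_ext; intro; split; [tauto | intros [_ []]]).
  set (c := mu (fun _ => False)) in *.
  apply arbitrarily_small_zero. intros e He.
  assert (He2 : e / 2 > 0) by lra.
  destruct (Hs _ He2) as [M HM].
  pose proof (HM M (Nat.le_refl _)) as H1. pose proof (HM (S M) (Nat.le_succ_diag_r _)) as H2.
  unfold Rdist in *. simpl in H2. set (s := sum_f_R0 (fun _ => c) M) in *.
  clearbody s c. split_Rabs; lra.
Qed.

Lemma measure_null A : (forall L, ~ A L) -> mu A = 0.
Proof.
  intro HA. rewrite <- measure_empty. f_equal.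
  apply event_ext; intro L; split; [apply HA | tauto].
Qed.

(* Finite additivity: countable additivity for the sequence A, B, {}, {}, ... *)
Lemma measure_add A B : borel A -> borel B -> (forall L, A L -> B L -> False) ->
  mu (fun L => A L \/ B L) = mu A + mu B.
Proof.
  intros HA HB Hdisj. destruct Hmu as [_ [_ Hadd]].
  set (E := fun n : nat => match n with O => A | 1%nat => B | _ => fun _ : LO N => False end).
  assert (HE : forall n, borel (E n)) by (intros [|[|n]]; simpl; auto; apply borel_false).
  assert (HEdisj : forall m n L, m <> n -> E m L -> E n L -> False).
  { intros [|[|m]] [|[|n]] L Hmn; simpl; try tauto; try lia; eauto. }
  pose proof (Hadd E HE HEdisj) as Hs.
  replace (fun L : LO N => exists n, E n L) with (fun L => A L \/ B L) in Hs.
  2:{ apply event_ext; intro L; split.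
      - intros [H|H]; [exists O | exists 1%nat]; auto.
      - intros [[|[|n]] H]; simpl in H; tauto. }
  apply (uniqueness_sum (fun n => mu (E n))); auto.
  assert (Hpartial : forall n, sum_f_R0 (fun n => mu (E n)) (S n) = mu A + mu B).
  { induction n as [|n IH]; [reflexivity|]. simpl sum_f_R0 in *. rewrite IH.
    simpl. rewrite measure_empty. ring. }
  intros eps Heps. exists 1%nat. intros [|n] Hn; [lia|]. rewrite Hpartial. unfold Rdist.
  replace (mu A + mu B - (mu A + mu B)) with 0 by ring. rewrite Rabs_R0; lra.
Qed.

Lemma measure_diff A B : borel A -> borel B -> (forall L, A L -> B L) ->
  mu (fun L => B L /\ ~ A L) = mu B - mu A.
Proof.
  intros HA HB Hsub.
  pose proof (measure_add A (fun L => B L /\ ~ A L) HA (borel_diff _ _ HB HA)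
                (fun L a b => proj2 b a)) as Hs. cbv beta in Hs.
  replace (fun L => A L \/ (B L /\ ~ A L)) with B in Hs
    by (apply event_ext; intro L; split; [intro; tauto | intros [|[]]; auto]).
  lra.
Qed.

Lemma measure_mono A B : borel A -> borel B -> (forall L, A L -> B L) -> mu A <= mu B.
Proof.
  intros HA HB Hsub. pose proof (measure_diff A B HA HB Hsub).
  pose proof (measure_nonneg _ (borel_diff _ _ HB HA)). lra.
Qed.

Lemma measure_le1 A : borel A -> mu A <= 1.
Proof. intro; rewrite <- measure_full; apply measure_mono; auto using borel_true. Qed.

Lemma measure_cover A B C : borel A -> borel B -> borel C ->
  (forall L, C L -> A L \/ B L) -> mu C <= mu A + mu B.
Proof.
  intros HA HB HC Hcov.
  pose proof (measure_add A (fun L => B L /\ ~ A L) HA (borel_diff _ _ HB HA)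
                (fun L a b => proj2 b a)) as Hs. cbv beta in Hs.
  pose proof (measure_mono (fun L => B L /\ ~ A L) B (borel_diff _ _ HB HA) HB
                (fun L h => proj1 h)).
  assert (mu C <= mu (fun L => A L \/ (B L /\ ~ A L))).
  { apply measure_mono; auto using borel_or, borel_diff.
    intros L HL. destruct (Hcov L HL); destruct (classic (A L)); tauto. }
  lra.
Qed.

Lemma measure_symdiff_bound A B : borel A -> borel B -> Rabs (mu A - mu B) <= mu (symdiff A B).
Proof.
  intros HA HB.
  assert (mu A <= mu B + mu (symdiff A B)).
  { apply measure_cover; auto using borel_symdiff.
    intros L HL. unfold symdiff. destruct (classic (B L)); tauto. }
  assert (mu B <= mu A + mu (symdiff A B)).
  { apply measure_cover; auto using borel_symdiff.
    intros L HL. unfold symdiff. destruct (classic (A L)); tauto. }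
  split_Rabs; lra.
Qed.

Definition lsum {X : Type} (f : X -> R) (l : list X) : R :=
  fold_right (fun x s => f x + s) 0 l.

Lemma measure_list_union {X : Type} (E : X -> LO N -> Prop) (l : list X) :
  NoDup l -> (forall x, In x l -> borel (E x)) ->
  (forall x y L, In x l -> In y l -> x <> y -> E x L -> E y L -> False) ->
  mu (fun L => exists x, In x l /\ E x L) = lsum (fun x => mu (E x)) l.
Proof.
  induction l as [|x l IH]; intros Hnd HE Hdisj.
  - apply measure_null. intros L [_ [[] _]].
  - inversion Hnd as [|? ? Hx Hnd']; subst. simpl.
    replace (fun L => exists y, (x = y \/ In y l) /\ E y L)
      with (fun L => E x L \/ exists y, In y l /\ E y L).
    2:{ apply event_ext; intro L; split.
        - intros [H|[y [Hy H]]]; [exists x | exists y]; auto.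
        - intros [y [[<-|Hy] H]]; auto. right; exists y; auto. }
    rewrite measure_add, IH; auto.
    + intros; apply HE; simpl; auto.
    + intros y z L Hy Hz; apply Hdisj; simpl; auto.
    + apply HE; simpl; auto.
    + apply borel_exists_list; intros; apply HE; simpl; auto.
    + intros L H1 [y [Hy H2]]. apply (Hdisj x y L); simpl; auto.
      intro; subst; auto.
Qed.

Definition union_upto (A : nat -> LO N -> Prop) (k : nat) : LO N -> Prop :=
  fun L => exists n, (n < k)%nat /\ A n L.

Lemma union_upto_0 A : union_upto A 0 = (fun _ => False).
Proof. apply event_ext; intro L; split; [intros [n [H _]]; lia | tauto]. Qed.

Lemma union_upto_S A k : union_upto A (S k) = (fun L => union_upto A k L \/ A k L).
Proof.
  apply event_ext; intro L; split.
  - intros [n [Hn H]]. destruct (Nat.eq_dec n k) as [->|]; auto.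
    left; exists n; split; auto; lia.
  - intros [[n [Hn H]]|H]; [exists n | exists k]; split; auto; lia.
Qed.

Lemma borel_union_upto A k : (forall n, borel (A n)) -> borel (union_upto A k).
Proof.
  intro HA; induction k.
  - rewrite union_upto_0; apply borel_false.
  - rewrite union_upto_S; apply borel_or; auto.
Qed.

(* Continuity from below: finite unions exhaust the measure of a countable one.
   Apply countable additivity to the disjointified sequence D n = A n \ (A_0 u .. u A_(n-1)). *)
Lemma measure_continuity (A : nat -> LO N -> Prop) : (forall n, borel (A n)) ->
  forall e, e > 0 -> exists M, mu (fun L => exists n, A n L) - mu (union_upto A M) < e.
Proof.
  intros HA e He.
  set (D := fun n L => A n L /\ ~ union_upto A n L).
  assert (HD : forall n, borel (D n)) by (intro; apply borel_diff; auto using borel_union_upto).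
  assert (HDdisj : forall m n L, m <> n -> D m L -> D n L -> False).
  { intros m n L Hmn [H1 H2] [H3 H4]. destruct (Nat.lt_ge_cases m n).
    - apply H4; exists m; auto.
    - apply H2; exists n; split; auto; lia. }
  destruct Hmu as [_ [_ Hadd]].
  pose proof (Hadd D HD HDdisj) as Hs.
  replace (fun L => exists n, D n L) with (fun L => exists n, A n L) in Hs.
  2:{ apply event_ext; intro L; split.
      - intros [n Hn]. induction n as [n IH] using lt_wf_ind.
        destruct (classic (union_upto A n L)) as [[k [Hk Hk']]|Hnot].
        + exact (IH k Hk Hk').
        + exists n; split; auto.
      - intros [n [Hn _]]; exists n; auto. }
  assert (Hpartial : forall n, mu (union_upto A (S n)) = sum_f_R0 (fun n => mu (D n)) n).
  { induction n as [|n IH].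
    - simpl. f_equal. apply event_ext; intro L; unfold D, union_upto; split.
      + intros [n [Hn H]]. replace n with O in H by lia.
        split; auto. intros [k [Hk _]]; lia.
      + intros [H _]. exists O; split; auto.
    - simpl sum_f_R0. rewrite <- IH, (union_upto_S _ (S n)).
      replace (fun L => union_upto A (S n) L \/ A (S n) L)
        with (fun L => union_upto A (S n) L \/ D (S n) L).
      + rewrite measure_add; auto using borel_union_upto. intros L H1 [_ H2]; auto.
      + apply event_ext; intro L; unfold D.
        destruct (classic (union_upto A (S n) L)); tauto. }
  destruct (Hs e He) as [M HM]. exists (S M). rewrite Hpartial.
  specialize (HM M (Nat.le_refl _)). unfold Rdist in HM. split_Rabs; lra.
Qed.

Lemma measure_and_null_symdiff A A' : borel A -> borel A' ->
  mu (symdiff A A') = 0 -> mu (fun L => A L /\ A' L) = mu A.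
Proof.
  intros HA HA' Hnull.
  pose proof (measure_diff (fun L => A L /\ A' L) A (borel_and _ _ HA HA') HA
                (fun L H => proj1 H)) as Hdiff. cbv beta in Hdiff.
  assert (Hle : mu (fun L => A L /\ ~ (A L /\ A' L)) <= mu (symdiff A A')).
  { apply measure_mono; auto using borel_symdiff, borel_diff, borel_and.
    intros L; unfold symdiff; tauto. }
  pose proof (measure_nonneg _ (borel_diff _ _ HA (borel_and _ _ HA HA'))). lra.
Qed.

Lemma measure_and_symdiff_bound A A' B B' : borel A -> borel A' -> borel B -> borel B' ->
  Rabs (mu (fun L => A L /\ A' L) - mu (fun L => B L /\ B' L))
    <= mu (symdiff A B) + mu (symdiff A' B').
Proof.
  intros HA HA' HB HB'.
  eapply Rle_trans; [apply measure_symdiff_bound; apply borel_and; auto|].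
  apply measure_cover; auto using borel_symdiff, borel_and.
  intros L; unfold symdiff; tauto.
Qed.

Definition approximable (A : LO N -> Prop) : Prop :=
  forall e, e > 0 -> exists B, cylinder B /\ mu (symdiff A B) <= e.

Lemma approximable_or A1 A2 : borel A1 -> borel A2 ->
  approximable A1 -> approximable A2 -> approximable (fun L => A1 L \/ A2 L).
Proof.
  intros HA1 HA2 Hap1 Hap2 e He.
  assert (He2 : e / 2 > 0) by lra.
  destruct (Hap1 _ He2) as [B1 [HB1 Hle1]], (Hap2 _ He2) as [B2 [HB2 Hle2]].
  exists (fun L => B1 L \/ B2 L). split; [apply cylinder_or; auto|].
  pose proof (proj1 HB1). pose proof (proj1 HB2).
  eapply Rle_trans; [apply (measure_cover (symdiff A1 B1) (symdiff A2 B2))|];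
    auto using borel_symdiff, borel_or; [|lra].
  intro L; unfold symdiff; tauto.
Qed.

Lemma approximable_union_upto (A : nat -> LO N -> Prop) : (forall n, borel (A n)) ->
  (forall n, approximable (A n)) -> forall k, approximable (union_upto A k).
Proof.
  intros HA Hap k; induction k as [|k IH].
  - rewrite union_upto_0. intros e He. exists (fun _ => False). split; [apply cylinder_false|].
    rewrite measure_null; [lra|]. unfold symdiff; tauto.
  - rewrite union_upto_S. apply approximable_or; auto using borel_union_upto.
Qed.

(* A countable union is close to a finite one (continuity), which is close to a cylinder. *)
Lemma approximable_union (A : nat -> LO N -> Prop) : (forall n, borel (A n)) ->
  (forall n, approximable (A n)) -> approximable (fun L => exists n, A n L).
Proof.
  intros HA Hap e He.
  assert (He2 : e / 2 > 0) by lra.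
  destruct (measure_continuity A HA _ He2) as [M HM].
  destruct (approximable_union_upto A HA Hap M _ He2) as [B [HB Hle]].
  exists B; split; auto.
  assert (HU : borel (fun L => exists n, A n L)) by (apply borel_union; auto).
  pose proof (proj1 HB). pose proof (borel_union_upto A M HA).
  rewrite <- (measure_diff (union_upto A M) (fun L => exists n, A n L)) in HM; auto.
  2:{ intros L [n [_ Hn]]; exists n; auto. }
  eapply Rle_trans;
    [apply (measure_cover (fun L => (exists n, A n L) /\ ~ union_upto A M L)
                          (symdiff (union_upto A M) B))|];
    auto using borel_diff, borel_symdiff; [|lra].
  intros L. unfold symdiff. intros [[H1 H2]|[H1 H2]].
  - destruct (classic (union_upto A M L)); tauto.
  - right; right; split; auto. intros [n [_ Hn]]; apply H2; exists n; auto.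
Qed.

Lemma approximation A : borel A -> approximable A.
Proof.
  induction 1 as [x y | A HA IH | A HA IH | A B HA IH Hext].
  - intros e He. exists (fun L => lt_lo L x y = true). split; [apply cylinder_gen|].
    rewrite measure_null; [lra|]. unfold symdiff; tauto.
  - intros e He. destruct (IH e He) as [B [HB Hle]].
    exists (fun L => ~ B L). split; [apply cylinder_compl; auto|].
    replace (symdiff (fun L => ~ A L) (fun L => ~ B L)) with (symdiff A B); auto.
    apply event_ext; intro L; unfold symdiff.
    destruct (classic (A L)), (classic (B L)); tauto.
  - apply approximable_union; auto.
  - replace B with A by (apply event_ext; auto). auto.
Qed.

End Measure.

Lemma chain_cons (L : LO N) x s :
  chain L (x :: s) <-> (forall z, In z s -> lt_lo L x z = true) /\ chain L s.
Proof.
  revert x; induction s as [|y s IH]; intro x.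
  - simpl; split; [intros _; split; [intros z []|exact I] | intros _; exact I].
  - change (chain L (x :: y :: s)) with (lt_lo L x y = true /\ chain L (y :: s)).
    split.
    + intros [Hxy Hs]. split; auto. intros z [<-|Hz]; auto.
      apply (proj1 (IH y) Hs) in Hz. eapply lt_trans; eauto.
    + intros [Hx Hs]. split; auto. apply Hx; simpl; auto.
Qed.

Lemma chain_agree (L L' : LO N) r : NoDup r -> chain L r -> chain L' r ->
  forall x y, In x r -> In y r -> lt_lo L x y = lt_lo L' x y.
Proof.
  induction r as [|z s IH]; intros Hnd C C' x y Hx Hy; [destruct Hx|].
  inversion Hnd as [|? ? Hzs Hnd']; subst.
  apply chain_cons in C as [Cz Cs]; apply chain_cons in C' as [Cz' Cs'].
  destruct Hx as [<-|Hx], Hy as [<-|Hy].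
  - rewrite !lt_irrefl; auto.
  - rewrite Cz, Cz'; auto.
  - rewrite !lt_asym by auto. reflexivity.
  - apply IH; auto.
Qed.

Lemma chain_unique (L : LO N) r1 : forall r2, NoDup r1 -> NoDup r2 ->
  (forall z, In z r1 <-> In z r2) -> chain L r1 -> chain L r2 -> r1 = r2.
Proof.
  induction r1 as [|x s1 IH]; intros r2 N1 N2 Hsame C1 C2.
  - destruct r2 as [|y s2]; auto. exfalso; apply (proj2 (Hsame y)); simpl; auto.
  - destruct r2 as [|y s2]; [exfalso; apply (proj1 (Hsame x)); simpl; auto|].
    inversion N1 as [|? ? Hx1 N1']; subst. inversion N2 as [|? ? Hy2 N2']; subst.
    apply chain_cons in C1 as [Cx D1]; apply chain_cons in C2 as [Cy D2].
    destruct (classic (x = y)) as [<-|Hne].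
    + f_equal. apply IH; auto. intro z; split; intro Hz.
      * assert (In z (x :: s2)) as [<-|]; [apply Hsame; simpl; auto | contradiction | auto].
      * assert (In z (x :: s1)) as [<-|]; [apply Hsame; simpl; auto | contradiction | auto].
    + exfalso.
      assert (Hxs : In x s2)
        by (destruct (proj1 (Hsame x) (or_introl eq_refl)); [congruence | auto]).
      assert (Hys : In y s1)
        by (destruct (proj2 (Hsame y) (or_introl eq_refl)); [congruence | auto]).
      pose proof (Cx y Hys) as Hxy. rewrite (lt_asym L y x (Cy x Hxs)) in Hxy. discriminate.
Qed.

Fixpoint insertions (x : N) (l : list N) : list (list N) :=
  match l with
  | [] => [[x]]
  | y :: l' => (x :: l) :: map (cons y) (insertions x l')
  end.

Fixpoint arrangements (l : list N) : list (list N) :=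
  match l with
  | [] => [[]]
  | x :: l' => flat_map (insertions x) (arrangements l')
  end.

Lemma insertions_perm x l r : In r (insertions x l) -> Permutation r (x :: l).
Proof.
  revert r; induction l as [|y l IH]; intros r H; simpl in H.
  - destruct H as [<-|[]]; auto.
  - destruct H as [<-|H]; auto. apply in_map_iff in H as [r' [<- H]].
    apply IH in H. eapply perm_trans; [apply perm_skip, H | apply perm_swap].
Qed.

Lemma arrangements_perm l r : In r (arrangements l) -> Permutation r l.
Proof.
  revert r; induction l as [|x l IH]; intros r H; simpl in H.
  - destruct H as [<-|[]]; auto.
  - apply in_flat_map in H as [r' [H1 H2]]. apply insertions_perm in H2.
    eapply perm_trans; eauto.
Qed.

Lemma insertions_chain (L : LO N) x l : chain L l -> ~ In x l ->
  exists r, In r (insertions x l) /\ chain L r.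
Proof.
  induction l as [|y l IH]; intros C Hx; [exists [x]; simpl; auto|].
  apply chain_cons in C as C'. destruct C' as [Cy Cl].
  assert (Hxy : x <> y) by (intro; subst; apply Hx; simpl; auto).
  destruct (lt_total L x y Hxy) as [H|H].
  - exists (x :: y :: l). split; [simpl; auto|]. apply chain_cons. split; auto.
    intros z [<-|Hz]; auto. eapply lt_trans; eauto.
  - destruct IH as [r' [H1 H2]]; auto. { intro; apply Hx; simpl; auto. }
    exists (y :: r'). split; [simpl; right; apply in_map; auto|].
    apply chain_cons; split; auto. intros z Hz.
    apply (Permutation_in z (insertions_perm _ _ _ H1)) in Hz as [<-|Hz]; auto.
Qed.

Lemma arrangements_chain (L : LO N) l : NoDup l -> exists r, In r (arrangements l) /\ chain L r.
Proof.
  induction l as [|x l IH]; intro Hnd; [exists []; simpl; auto|].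
  inversion Hnd as [|? ? Hx Hnd']; subst. destruct (IH Hnd') as [r' [H1 H2]].
  destruct (insertions_chain L x r' H2) as [r [H3 H4]].
  - intro H; apply Hx, (Permutation_in x (arrangements_perm _ _ H1)); auto.
  - exists r; split; auto. simpl. apply in_flat_map. exists r'; auto.
Qed.

Lemma nodup_exists {X : Type} (l : list X) :
  exists l', NoDup l' /\ forall z, In z l <-> In z l'.
Proof.
  induction l as [|x l [l' [H1 H2]]]; [exists []; split; [constructor | tauto]|].
  destruct (classic (In x l')).
  - exists l'; split; auto. intro z; simpl; rewrite H2; split; [intros [<-|]|]; auto.
  - exists (x :: l'); split; [constructor; auto|]. intro z; simpl; rewrite H2; tauto.
Qed.

Definition orderings_of (F : list N) (P : list (list N)) : Prop :=
  NoDup P /\ (forall r, In r P -> NoDup r /\ forall z, In z r <-> In z F) /\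
  forall L, exists r, In r P /\ chain L r.

Lemma orderings_exist F : exists P, orderings_of F P.
Proof.
  destruct (nodup_exists F) as [F0 [HF0 EF0]].
  destruct (nodup_exists (arrangements F0)) as [P [HP EP]].
  exists P. split; [|split]; auto.
  - intros r Hr. apply EP, arrangements_perm in Hr. split.
    + exact (Permutation_NoDup (Permutation_sym Hr) HF0).
    + intro z. rewrite EF0. split; intro Hz;
        [apply (Permutation_in z Hr) | apply (Permutation_in z (Permutation_sym Hr))]; auto.
  - intro L. destruct (arrangements_chain L F0 HF0) as [r [H1 H2]].
    exists r; split; auto. apply EP; auto.
Qed.

Fixpoint shuffles (p : list N) : list N -> list (list N) :=
  match p with
  | [] => fun q => [q]
  | x :: p' => fix shuffles_x (q : list N) : list (list N) :=
      match q with
      | [] => [x :: p']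
      | y :: q' => map (cons x) (shuffles p' (y :: q')) ++ map (cons y) (shuffles_x q')
      end
  end.

Lemma shuffles_cons x p y q : shuffles (x :: p) (y :: q) =
  map (cons x) (shuffles p (y :: q)) ++ map (cons y) (shuffles (x :: p) q).
Proof. reflexivity. Qed.

Lemma shuffles_nil p : shuffles p [] = [p].
Proof. destruct p; reflexivity. Qed.

Lemma shuffles_perm p : forall q r, In r (shuffles p q) -> Permutation r (p ++ q).
Proof.
  induction p as [|x p IHp]; intro q; [simpl; intros r [<-|[]]; auto|].
  induction q as [|y q IHq]; intros r H.
  - rewrite shuffles_nil in H. destruct H as [<-|[]]. rewrite app_nil_r; auto.
  - rewrite shuffles_cons in H.
    apply in_app_or in H as [H|H]; apply in_map_iff in H as [r' [<- H]].
    + apply IHp in H. simpl. apply perm_skip; auto.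
    + apply IHq in H. eapply perm_trans; [apply perm_skip, H|]. simpl.
      apply perm_trans with (x :: y :: p ++ q); [apply perm_swap|].
      apply perm_skip, Permutation_middle.
Qed.

Lemma shuffles_nodup p : forall q, NoDup (p ++ q) -> NoDup (shuffles p q).
Proof.
  induction p as [|x p IHp]; intro q; [intros _; simpl; repeat constructor; auto|].
  induction q as [|y q IHq]; intro Hnd; [rewrite shuffles_nil; repeat constructor; auto|].
  rewrite shuffles_cons.
  assert (Hnd1 : NoDup (p ++ y :: q)) by (inversion Hnd; auto).
  assert (Hnd2 : NoDup ((x :: p) ++ q)) by (apply NoDup_remove_1 in Hnd; auto).
  assert (Hcons : forall z, FinFun.Injective (@cons N z)) by (intros z u v E; injection E; auto).
  apply NoDup_app.
  - apply FinFun.Injective_map_NoDup; auto.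
  - apply FinFun.Injective_map_NoDup; auto.
  - intros r H1 H2. apply in_map_iff in H1 as [r1 [<- _]], H2 as [r2 [E _]].
    injection E; intros _ ->. apply NoDup_remove_2 in Hnd. apply Hnd; simpl; auto.
Qed.

Lemma shuffles_count p : forall q,
  (length (shuffles p q) * fact (length p) * fact (length q) = fact (length p + length q))%nat.
Proof.
  induction p as [|x p IHp]; intro q; [simpl; lia|].
  induction q as [|y q IHq].
  - rewrite shuffles_nil. cbn [length]. rewrite Nat.add_0_r. change (fact 0) with 1%nat. lia.
  - rewrite shuffles_cons, length_app, !length_map.
    specialize (IHp (y :: q)). simpl length in *.
    set (a := length p) in *. set (b := length q) in *.
    set (l1 := length (shuffles p (y :: q))) in *.
    set (l2 := length (shuffles (x :: p) q)) in *.
    replace (fact (S a + b)) with (fact (a + S b)) in IHq by (f_equal; lia).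
    replace (fact (S a + S b)) with (S (a + S b) * fact (a + S b))%nat
      by (replace (S a + S b)%nat with (S (a + S b)) by lia; reflexivity).
    change (fact (S a)) with (S a * fact a)%nat in *.
    change (fact (S b)) with (S b * fact b)%nat in *.
    nia.
Qed.

Lemma chain_shuffle (L : LO N) p : forall q, chain L p -> chain L q -> NoDup (p ++ q) ->
  exists r, In r (shuffles p q) /\ chain L r.
Proof.
  induction p as [|x p IHp]; intro q; [intros _ Cq _; exists q; simpl; auto|].
  induction q as [|y q IHq]; intros Cp Cq Hnd;
    [exists (x :: p); rewrite shuffles_nil; simpl; auto|].
  assert (Hnd1 : NoDup (p ++ y :: q)) by (inversion Hnd; auto).
  assert (Hnd2 : NoDup ((x :: p) ++ q)) by (apply NoDup_remove_1 in Hnd; auto).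
  assert (Hxy : x <> y) by (intros ->; apply NoDup_remove_2 in Hnd; apply Hnd; simpl; auto).
  apply chain_cons in Cp as Cp'; apply chain_cons in Cq as Cq'.
  destruct Cp' as [Cx Cp2], Cq' as [Cy Cq2].
  rewrite shuffles_cons.
  destruct (lt_total L x y Hxy) as [H|H].
  - destruct (IHp (y :: q) Cp2 Cq Hnd1) as [r' [H1 H2]].
    exists (x :: r'). split; [apply in_or_app; left; apply in_map; auto|].
    apply chain_cons; split; auto. intros z Hz.
    apply (Permutation_in z (shuffles_perm _ _ _ H1)), in_app_or in Hz.
    destruct Hz as [Hz|[<-|Hz]]; auto. eapply lt_trans; eauto.
  - destruct (IHq Cp Cq2 Hnd2) as [r' [H1 H2]].
    exists (y :: r'). split; [apply in_or_app; right; apply in_map; auto|].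
    apply chain_cons; split; auto. intros z Hz.
    apply (Permutation_in z (shuffles_perm _ _ _ H1)), in_app_or in Hz.
    destruct Hz as [[<-|Hz]|Hz]; auto. eapply lt_trans; eauto.
Qed.

Lemma shuffle_chain (L : LO N) p : forall q r, In r (shuffles p q) -> chain L r ->
  chain L p /\ chain L q.
Proof.
  induction p as [|x p IHp]; intro q; [simpl; intros r [<-|[]] C; simpl; auto|].
  induction q as [|y q IHq]; intros r Hr C.
  - rewrite shuffles_nil in Hr. destruct Hr as [<-|[]]. simpl; auto.
  - rewrite shuffles_cons in Hr.
    apply in_app_or in Hr as [Hr|Hr]; apply in_map_iff in Hr as [r' [<- Hr]];
      apply chain_cons in C as [Cz C].
    + destruct (IHp _ _ Hr C) as [H1 H2]. split; auto. apply chain_cons; split; auto.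
      intros z Hz. apply Cz.
      apply (Permutation_in z (Permutation_sym (shuffles_perm _ _ _ Hr))), in_or_app; auto.
    + destruct (IHq _ Hr C) as [H1 H2]. split; auto. apply chain_cons; split; auto.
      intros z Hz. apply Cz.
      apply (Permutation_in z (Permutation_sym (shuffles_perm _ _ _ Hr))), in_or_app; simpl; auto.
Qed.

Lemma lsum_ext {X : Type} (f g : X -> R) l :
  (forall x, In x l -> f x = g x) -> lsum f l = lsum g l.
Proof. induction l; simpl; intros H; auto. rewrite H, IHl; auto. Qed.

Lemma lsum_const {X : Type} (c : R) (l : list X) : lsum (fun _ => c) l = INR (length l) * c.
Proof. induction l; simpl lsum; [simpl; ring|]. rewrite IHl, length_cons, S_INR. ring. Qed.

Lemma lsum_mull {X : Type} (c : R) f (l : list X) : lsum (fun x => c * f x) l = c * lsum f l.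
Proof. induction l; simpl; [ring|]. rewrite IHl; ring. Qed.

Lemma lsum_mulr {X : Type} (c : R) f (l : list X) : lsum (fun x => f x * c) l = lsum f l * c.
Proof. induction l; simpl; [ring|]. rewrite IHl; ring. Qed.

Lemma measure_split_orderings mu (Hmu : borel_prob_measure mu) F P X :
  orderings_of F P -> borel X ->
  mu X = lsum (fun r => mu (fun L => chain L r /\ X L)) P.
Proof.
  intros [HP [HPr HPcover]] HX.
  rewrite <- (measure_list_union mu Hmu (fun r L => chain L r /\ X L)); auto.
  - f_equal. apply event_ext; intro L; split.
    + intro H. destruct (HPcover L) as [r [H1 H2]]. exists r; auto.
    + intros [r [_ [_ H]]]; auto.
  - intros; apply borel_and; auto using borel_chain.
  - intros r s L Hr Hs Hne [C1 _] [C2 _]. apply Hne.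
    destruct (HPr r Hr) as [N1 E1], (HPr s Hs) as [N2 E2].
    apply (chain_unique L); auto. intro z; rewrite E1, E2; tauto.
Qed.

Lemma cell_cases F P B r : orderings_of F P -> In r P -> determined_by F B ->
  (fun L => chain L r /\ B L) = (fun L => chain L r) \/
  (fun L => chain L r /\ B L) = (fun _ => False).
Proof.
  intros [_ [HPr _]] Hr HB. destruct (HPr r Hr) as [Hnd Er].
  destruct (classic (forall L, chain L r -> B L)) as [H|H].
  - left. apply event_ext; intro L; split; [tauto | auto].
  - right. apply not_all_ex_not in H as [L0 H0].
    apply event_ext; intro L; split; [|tauto]. intros [C HBL]. apply H0. intro C0.
    apply (HB L L0); auto. intros x y Hx Hy. apply (chain_agree L L0 r); auto; apply Er; auto.
Qed.

Section Uniform.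
Variable lam : (LO N -> Prop) -> R.
Hypothesis Hlam : uniform_lo lam.

Lemma lam_prob : borel_prob_measure lam.
Proof. apply Hlam. Qed.

Lemma lam_chain r : NoDup r -> lam (fun L => chain L r) = / INR (fact (length r)).
Proof. apply Hlam. Qed.

(* Chains on disjoint points are independent: the event is the disjoint union
   of the chains on the (p+q)!/(p! q!) shuffles, each of measure 1/(p+q)!. *)
Lemma chains_independent p q : NoDup (p ++ q) ->
  lam (fun L => chain L p /\ chain L q) = / INR (fact (length p)) * / INR (fact (length q)).
Proof.
  intro Hnd.
  assert (Hshuffle_nodup : forall r, In r (shuffles p q) -> NoDup r).
  { intros r Hr. exact (Permutation_NoDup (Permutation_sym (shuffles_perm _ _ _ Hr)) Hnd). }
  replace (fun L => chain L p /\ chain L q)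
    with (fun L => exists r, In r (shuffles p q) /\ chain L r).
  2:{ apply event_ext; intro L; split.
      - intros [r [H1 H2]]. eapply shuffle_chain; eauto.
      - intros [H1 H2]. apply chain_shuffle; auto. }
  rewrite (measure_list_union lam lam_prob (fun r L => chain L r)); auto using shuffles_nodup.
  - rewrite (lsum_ext _ (fun _ => / INR (fact (length p + length q)))).
    + rewrite lsum_const. pose proof (shuffles_count p q) as Hcount.
      apply (f_equal INR) in Hcount. rewrite !mult_INR in Hcount. rewrite <- Hcount.
      pose proof (INR_fact_neq_0 (length p)). pose proof (INR_fact_neq_0 (length q)).
      assert (INR (length (shuffles p q)) <> 0).
      { intro Z. rewrite Z in Hcount. pose proof (INR_fact_neq_0 (length p + length q)). lra. }
      field; auto.
    + intros r Hr. rewrite lam_chain by auto.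
      rewrite (Permutation_length (shuffles_perm _ _ _ Hr)), length_app; auto.
  - intros; apply borel_chain.
  - intros r s L Hr Hs Hne C1 C2. apply Hne, (chain_unique L); auto.
    intro z. pose proof (shuffles_perm _ _ _ Hr) as Pr. pose proof (shuffles_perm _ _ _ Hs) as Ps.
    split; intro Hz.
    + exact (Permutation_in z (Permutation_sym Ps) (Permutation_in z Pr Hz)).
    + exact (Permutation_in z (Permutation_sym Pr) (Permutation_in z Ps Hz)).
Qed.

Lemma cell_product r s (X1 X2 : LO N -> Prop) : NoDup (r ++ s) ->
  (X1 = (fun L => chain L r) \/ X1 = (fun _ => False)) ->
  (X2 = (fun L => chain L s) \/ X2 = (fun _ => False)) ->
  lam (fun L => X1 L /\ X2 L) = lam X1 * lam X2.
Proof.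
  intros Hnd [->| ->] [->| ->];
    try (rewrite !(measure_null _ lam_prob (fun _ => False)) by tauto;
         rewrite (measure_null _ lam_prob) by tauto; ring).
  rewrite chains_independent, !lam_chain; auto.
  - exact (NoDup_app_remove_l _ _ Hnd).
  - exact (NoDup_app_remove_r _ _ Hnd).
Qed.

(* Independence: sets determined by disjoint finite sets F and G are independent.
   Split both along the orderings of F and of G; the cells then factor. *)
Lemma cylinders_independent F G B C : determined_by F B -> determined_by G C ->
  borel B -> borel C -> (forall z, In z F -> ~ In z G) ->
  lam (fun L => B L /\ C L) = lam B * lam C.
Proof.
  intros FB GC HB HC Hdisj.
  destruct (orderings_exist F) as [P HP], (orderings_exist G) as [Q HQ].
  rewrite (measure_split_orderings _ lam_prob F P _ HP (borel_and _ _ HB HC)),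
    (measure_split_orderings _ lam_prob F P B HP HB),
    (measure_split_orderings _ lam_prob G Q C HQ HC), <- lsum_mulr.
  apply lsum_ext. intros r Hr.
  rewrite (measure_split_orderings _ lam_prob G Q _ HQ), <- lsum_mull;
    [|apply borel_and; [apply borel_chain | apply borel_and; auto]].
  apply lsum_ext. intros s Hs.
  replace (fun L => chain L s /\ chain L r /\ B L /\ C L) with
    (fun L => (fun L => chain L r /\ B L) L /\ (fun L => chain L s /\ C L) L)
    by (apply event_ext; intro; tauto).
  destruct (proj1 (proj2 HP) r Hr) as [Nr Er], (proj1 (proj2 HQ) s Hs) as [Ns Es].
  apply (cell_product r s); [| apply (cell_cases F P) | apply (cell_cases G Q)]; auto.
  apply NoDup_app; auto. intros z Hz1 Hz2. apply (Hdisj z); [apply Er | apply Es]; auto.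
Qed.

End Uniform.

Lemma infinite_sum_average (u v : nat -> R) su sv :
  infinite_sum u su -> infinite_sum v sv ->
  infinite_sum (fun n => (u n + v n) / 2) ((su + sv) / 2).
Proof.
  intros Hu Hv e He.
  assert (Hpartial : forall n,
    sum_f_R0 (fun n => (u n + v n) / 2) n = (sum_f_R0 u n + sum_f_R0 v n) / 2).
  { induction n; simpl; [lra|]. rewrite IHn; lra. }
  destruct (Hu e He) as [N1 H1], (Hv e He) as [N2 H2].
  exists (max N1 N2). intros n Hn. rewrite Hpartial. unfold Rdist in *.
  specialize (H1 n ltac:(lia)). specialize (H2 n ltac:(lia)). split_Rabs; lra.
Qed.

Lemma average_prob (mu1 mu2 : (LO N -> Prop) -> R) :
  borel_prob_measure mu1 -> borel_prob_measure mu2 ->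
  borel_prob_measure (fun X => (mu1 X + mu2 X) / 2).
Proof.
  intros [P1 [T1 C1]] [P2 [T2 C2]]. split; [|split].
  - intros A HA. specialize (P1 A HA). specialize (P2 A HA). lra.
  - rewrite T1, T2; lra.
  - intros A HA Hdisj. apply infinite_sum_average; auto.
Qed.

Section Translation.
Variable K : Group.
Variable a : Action K N.

Lemma lt_translate (g : K) (L : LO N) x y :
  lt_lo (act_lo a (ginv K g) L) x y = lt_lo L (a g x) (a g y).
Proof. unfold lt_lo, act_lo; simpl. rewrite ginv_inv. reflexivity. Qed.

Lemma translate_chain (g : K) r :
  act_set a g (fun L => chain L r) = (fun L => chain L (map (a g) r)).
Proof.
  apply event_ext; intro L. unfold act_set. induction r as [|x s IH]; [simpl; tauto|].
  cbn [map]. rewrite !chain_cons, IH. split; intros [H1 H2]; split; auto.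
  - intros z Hz. apply in_map_iff in Hz as [w [<- Hw]]. rewrite <- lt_translate. auto.
  - intros z Hz. rewrite lt_translate. exact (H1 _ (in_map _ _ _ Hz)).
Qed.

Lemma borel_translate (g : K) X : borel X -> borel (act_set a g X).
Proof.
  induction 1 as [x y | A HA IH | A HA IH | A B HA IH Hext].
  - apply borel_ext with (fun L => lt_lo L (a g x) (a g y) = true); [apply borel_gen|].
    intro L; unfold act_set. rewrite lt_translate. tauto.
  - apply borel_ext with (fun L => ~ act_set a g A L); [apply borel_compl; auto|].
    intro; unfold act_set; tauto.
  - apply borel_ext with (fun L => exists n, act_set a g (A n) L); [apply borel_union; auto|].
    intro; unfold act_set; tauto.
  - apply borel_ext with (act_set a g A); auto. intro L; unfold act_set; apply Hext.
Qed.

Lemma determined_translate (g : K) F B :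
  determined_by F B -> determined_by (map (a g) F) (act_set a g B).
Proof.
  unfold determined_by, act_set. intros HB L L' Hagree. apply HB.
  intros x y Hx Hy. rewrite !lt_translate. exact (Hagree _ _ (in_map _ _ _ Hx) (in_map _ _ _ Hy)).
Qed.

Lemma translate_prob (mu : (LO N -> Prop) -> R) (g : K) :
  borel_prob_measure mu -> borel_prob_measure (fun X => mu (act_set a g X)).
Proof.
  intros [Hpos [Hfull Hadd]]. split; [|split].
  - intros A HA; apply Hpos, borel_translate; auto.
  - exact Hfull.
  - intros A HA Hdisj.
    exact (Hadd (fun n => act_set a g (A n)) (fun n => borel_translate g _ (HA n))
             (fun m n L Hmn H1 H2 => Hdisj m n _ Hmn H1 H2)).
Qed.

Section Invariance.
Variable lam : (LO N -> Prop) -> R.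
Hypothesis Hlam : uniform_lo lam.

(* Invariance on cylinders: split along the orderings of F; g maps each
   chain to a chain of the same length, so each cell keeps its measure. *)
Lemma lam_invariant_cylinder (g : K) F B : determined_by F B -> borel B ->
  lam (act_set a g B) = lam B.
Proof.
  intros FB HB. destruct (orderings_exist F) as [P HP].
  pose proof (lam_prob lam Hlam) as Hm.
  rewrite (measure_split_orderings _ (translate_prob lam g Hm) F P B HP HB),
    (measure_split_orderings _ Hm F P B HP HB).
  apply lsum_ext. intros r Hr.
  destruct (proj1 (proj2 HP) r Hr) as [Nr _].
  destruct (cell_cases F P B r HP Hr FB) as [-> | ->].
  - rewrite translate_chain, !(lam_chain lam Hlam), length_map; auto.
    apply FinFun.Injective_map_NoDup; auto. intros x y; apply act_inj.
  - reflexivity.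
Qed.

(* Invariance on Borel sets: approximate X by a cylinder B simultaneously for
   lam and its translate, using their average. *)
Lemma lam_invariant (g : K) X : borel X -> lam (act_set a g X) = lam X.
Proof.
  intro HX. pose proof (lam_prob lam Hlam) as Hm. pose proof (translate_prob lam g Hm) as Hg.
  apply Rminus_diag_uniq, arbitrarily_small_zero. intros e He.
  assert (He4 : e / 4 > 0) by lra.
  destruct (approximation _ (average_prob _ _ Hm Hg) X HX _ He4)
    as [B [[HB [F FB]] Hle]]. cbv beta in Hle.
  pose proof (measure_nonneg _ Hm (symdiff X B) (borel_symdiff _ _ HX HB)).
  pose proof (measure_nonneg _ Hg (symdiff X B) (borel_symdiff _ _ HX HB)). cbv beta in *.
  pose proof (measure_symdiff_bound _ Hm X B HX HB).
  pose proof (measure_symdiff_bound _ Hm (act_set a g X) (act_set a g B)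
                (borel_translate g _ HX) (borel_translate g _ HB)) as Htr.
  change (symdiff (act_set a g X) (act_set a g B)) with (act_set a g (symdiff X B)) in Htr.
  rewrite (lam_invariant_cylinder g F B FB HB) in Htr.
  split_Rabs; lra.
Qed.

(* The key estimate: for an invariant A, lam(A) is arbitrarily close to lam(A)^2.
   Take a cylinder B on F close to A and g with gF disjoint from F; then
   lam(A) = lam(A /\ gA) ~ lam(B /\ gB) = lam(B) lam(gB) = lam(B)^2 ~ lam(A)^2. *)
Lemma invariant_measure_square : no_finite_orbits a -> forall A, borel A ->
  (forall g : K, lam (symdiff A (act_set a g A)) = 0) ->
  forall e, e > 0 -> Rabs (lam A - lam A * lam A) <= e.
Proof.
  intros Horb A HA Hinv e He. pose proof (lam_prob lam Hlam) as Hm.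
  assert (He4 : e / 4 > 0) by lra.
  destruct (approximation _ Hm A HA _ He4) as [B [[HB [F FB]] Hclose]].
  destruct (neumann N K a Horb F) as [g Hg].
  set (gA := act_set a g A). set (gB := act_set a g B).
  assert (HgA : borel gA) by (apply borel_translate; auto).
  assert (HgB : borel gB) by (apply borel_translate; auto).
  assert (Hindep : lam (fun L => B L /\ gB L) = lam B * lam B).
  { rewrite (cylinders_independent lam Hlam F _ B gB FB (determined_translate g F B FB) HB HgB).
    - unfold gB. rewrite (lam_invariant_cylinder g F B FB HB); auto.
    - intros z Hz HzF. apply in_map_iff in HzF as [w [<- Hw]]. exact (Hg w Hw Hz). }
  assert (HAgA : lam (fun L => A L /\ gA L) = lam A)
    by (apply (measure_and_null_symdiff _ Hm); [exact HA | exact HgA | exact (Hinv g)]).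
  assert (HgAgB : lam (symdiff gA gB) = lam (symdiff A B))
    by (apply (lam_invariant g (symdiff A B)), borel_symdiff; auto).
  pose proof (measure_and_symdiff_bound _ Hm A gA B gB HA HgA HB HgB) as Hand.
  rewrite Hindep, HgAgB, HAgA in Hand.
  pose proof (measure_symdiff_bound _ Hm A B HA HB).
  pose proof (measure_le1 _ Hm A HA). pose proof (measure_nonneg _ Hm A HA).
  pose proof (measure_le1 _ Hm B HB). pose proof (measure_nonneg _ Hm B HB).
  assert (Hsq : Rabs (lam B * lam B - lam A * lam A) <= e / 2).
  { replace (lam B * lam B - lam A * lam A) with ((lam B - lam A) * (lam B + lam A)) by ring.
    rewrite Rabs_mult, (Rabs_pos_eq (lam B + lam A)), Rabs_minus_sym by lra.
    apply Rle_trans with (e / 4 * 2); [apply Rmult_le_compat; try lra; apply Rabs_pos | lra]. }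
  split_Rabs; lra.
Qed.

End Invariance.
End Translation.
End Orderings.

(* The uniform measure on LO(N) is K-ergodic: an invariant Borel set A
   satisfies lambda(A) = lambda(A)^2, so lambda(A) is 0 or 1. *)
Theorem lemma2 (N : Type) (K : Group) (a : Action K N)
  (HN : countably_infinite N) (Horb : no_finite_orbits a)
  (lambda : (LO N -> Prop) -> R) (Hlam : uniform_lo lambda) :
  ergodic a lambda.
Proof.
  destruct HN as [enum _].
  intros A HA Hinv.
  assert (Hidem : lambda A * (1 - lambda A) = 0).
  { replace (lambda A * (1 - lambda A)) with (lambda A - lambda A * lambda A) by ring.
    apply arbitrarily_small_zero.
    exact (invariant_measure_square N (enum 0%nat) K a lambda Hlam Horb A HA Hinv). }
  apply Rmult_integral in Hidem as [Hzero|Hone]; [left | right]; lra.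
Qed.
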